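(* Let $C\subseteq\mathbb{F}_q^n$ be a constant weight linear code. Then the map from the set of subcodes of $C$ to $2^{\{1,\dots,n\}}$ sending a subcode $C'$ to $\mathrm{Supp}(C')$ is injective.
   Context: A subcode is a linear subspace of $C$. For a subcode $D$, $\mathrm{Supp}(D)=\{x\in\{1,\dots,n\}: \exists d\in D,\ d_x\neq0\}$. A constant weight code is a linear code all of whose non-zero codewords have the same number of non-zero coordinates. *)

From HB Require Import structures.
From mathcomp Require Import all_boot all_order all_algebra all_field.
Set Implicit Arguments. Unset Strict Implicit. Unset Printing Implicit Defensive.
Import GRing.Theory.
Local Open Scope ring_scope.

Definition wt (F : finFieldType) (n : nat) (v : 'rV[F]_n) : nat :=
  #|[set i : 'I_n | v 0 i != 0]|.

Definition constant_weight (F : finFieldType) (n : nat) (C : {vspace 'rV[F]_n}) : Prop :=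
  exists w : nat, forall c : 'rV[F]_n, c \in C -> c != 0 -> wt c = w.

Definition supp (F : finFieldType) (n : nat) (D : {vspace 'rV[F]_n}) : {set 'I_n} :=
  [set x : 'I_n | [exists d : 'rV[F]_n, (d \in D) && (d 0 x != 0)]].

From HB Require Import structures.
From mathcomp Require Import all_boot all_order all_algebra all_field.
Set Implicit Arguments. Unset Strict Implicit. Unset Printing Implicit Defensive.
Local Open Scope ring_scope.
Import GRing.Theory.

(* Let v be a codeword of C outside a subcode D with supp v contained in
   supp D.  For each coordinate x, choosing e in D with e_x = v_x, the shift
   d |-> d - e of D matches the d with (v + d)_x != 0 with those with d_x != 0;
   so the words v + d (d in D) have the same total weight as the words of D.
   But all v + d are nonzero codewords of C, whereas d = 0 has weight 0: with
   constant weight w this gives #|D| w = (#|D| - 1) w, so w = 0 and v = 0,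
   a contradiction.  Hence supp D determines which codewords of C lie in D. *)

Section Weight.

Variables (F : finFieldType) (n : nat).
Implicit Types (v d : 'rV[F]_n) (D : {vspace 'rV[F]_n}).

(* Inside nat-scoped sums the row index is written [ord0], as [0] would parse
   as a natural number. *)

Lemma wtE v : wt v = (\sum_(i < n) (v ord0 i != 0%R))%N.
Proof. by rewrite /wt -sum1_card big_mkcond; apply: eq_bigr => i _; rewrite inE. Qed.

Lemma wt_eq0 v : (wt v == 0%N) = (v == 0).
Proof.
rewrite /wt cards_eq0; apply/eqP/eqP => [v0 | ->].
  apply/rowP => j; rewrite mxE; apply/eqP/negPn/negP => vj0.
  by have := in_set0 j; rewrite -v0 inE vj0.
by apply/setP => j; rewrite !inE mxE eqxx.
Qed.

Lemma coord_supp D x a : x \in supp D -> exists2 e, e \in D & e 0 x = a.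
Proof.
rewrite inE => /existsP[d /andP[dD dx0]].
by exists ((a / d 0 x) *: d); rewrite ?memvZ // mxE divfK.
Qed.

Lemma sum_coord_addl D v x e : e \in D -> e 0 x = v 0 x ->
  (\sum_(d | d \in D) ((v + d)%R ord0 x != 0%R))%N =
  (\sum_(d | d \in D) (d ord0 x != 0%R))%N.
Proof.
move=> eD evx; rewrite (reindex_inj (addIr (- e))) /=.
apply: eq_big => [d | d _]; first by rewrite rpredBr.
by rewrite !mxE -evx addrC subrK.
Qed.

Lemma sum_wt_addl D v : (forall x, v 0 x != 0 -> x \in supp D) ->
  (\sum_(d | d \in D) wt (v + d)%R)%N = (\sum_(d | d \in D) wt d)%N.
Proof.
move=> suppv; under eq_bigr do rewrite wtE; under [RHS]eq_bigr do rewrite wtE.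
rewrite exchange_big [RHS]exchange_big; apply: eq_bigr => x _.
have [vx0 | /suppv xD] := eqVneq (v 0 x) 0.
  by apply: eq_bigr => d _; rewrite mxE vx0 add0r.
have [e eD evx] := coord_supp (v 0 x) xD.
exact: sum_coord_addl eD evx.
Qed.

End Weight.

Section ConstantWeight.

Variables (F : finFieldType) (n : nat) (C : {vspace 'rV[F]_n}) (w : nat).
Hypothesis wtC : forall c : 'rV[F]_n, c \in C -> c != 0 -> wt c = w.

Lemma sum_wt_subcode (D : {vspace 'rV[F]_n}) (v : 'rV[F]_n) :
  (D <= C)%VS -> v \in C -> v \notin D ->
  (\sum_(d | d \in D) wt (v + d)%R)%N = (w + \sum_(d | d \in D) wt d)%N.
Proof.
move=> sDC vC vD.
have v0 : v != 0 by apply: contraNneq vD => ->; apply: mem0v.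
have wt0 : wt (0 : 'rV[F]_n) = 0%N by apply/eqP; rewrite wt_eq0.
rewrite (bigD1 0) ?mem0v //= [in RHS](bigD1 0) ?mem0v //= addr0 wtC // wt0.
congr (_ + _)%N; rewrite (eq_bigr (fun _ => w)) => [|d /andP[dD _]].
  by apply: eq_bigr => d /andP[dD d0]; rewrite wtC ?(subvP sDC).
rewrite wtC ?rpredD ?(subvP sDC _ dD) //.
by apply: contraNneq vD => /eqP; rewrite addr_eq0 => /eqP ->; rewrite rpredN.
Qed.

Lemma mem_subcode_supp (D : {vspace 'rV[F]_n}) (v : 'rV[F]_n) :
  (D <= C)%VS -> v \in C -> (forall x, v 0 x != 0 -> x \in supp D) -> v \in D.
Proof.
move=> sDC vC suppv; apply: contraT => vD.
have v0 : v != 0 by apply: contraNneq vD => ->; apply: mem0v.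
have := sum_wt_subcode sDC vC vD; rewrite sum_wt_addl //.
move=> /(congr1 (subn^~ (\sum_(d | d \in D) wt d))); rewrite addnK subnn => w0.
by have /eqP := wtC vC v0; rewrite -w0 wt_eq0 (negbTE v0).
Qed.

Lemma subcode_subv_supp (D1 D2 : {vspace 'rV[F]_n}) :
  (D1 <= C)%VS -> (D2 <= C)%VS -> supp D2 \subset supp D1 -> (D2 <= D1)%VS.
Proof.
move=> sD1C sD2C /subsetP s21; apply/subvP => v vD2.
apply: mem_subcode_supp sD1C (subvP sD2C _ vD2) _ => x vx0.
by apply: s21; rewrite inE; apply/existsP; exists v; rewrite vD2.
Qed.

End ConstantWeight.

Theorem proposition2 (F : finFieldType) (n : nat) (C : {vspace 'rV[F]_n}) :
  constant_weight C ->
  forall D1 D2 : {vspace 'rV[F]_n},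
    (D1 <= C)%VS -> (D2 <= C)%VS -> supp D1 = supp D2 -> D1 = D2.
Proof.
move=> [w wtC] D1 D2 sD1C sD2C eq_supp.
apply/eqP; rewrite eqEsubv; apply/andP; split.
  by apply: (subcode_subv_supp wtC sD2C sD1C); rewrite eq_supp.
by apply: (subcode_subv_supp wtC sD1C sD2C); rewrite eq_supp.
Qed.
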